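(* Let $A,B\in \mathbb{R}^{m\times n}$ with $m<n$ and $b\in \mathbb{R}^m$. Suppose that the equation $Ax-B|x|=b$ has a solution $x_*$ and let $s=\operatorname{sign}(x_* )\in\{-1,0,1\}^n$ (entrywise). Let $C=A\operatorname{diag}(s)-B$. Suppose that $x_*$ has no fewer than $\operatorname{rank}(C)$ nonzero entries, and that there are index sets $\mathbb{I}_1\subseteq\{1,\dots,m\}$, $\mathbb{I}_2\subseteq\{1,\dots,n\}$ with $\operatorname{card}(\mathbb{I}_1)=\operatorname{card}(\mathbb{I}_2)=\operatorname{rank}(C)$ such that $C_{(\mathbb{I}_1,\mathbb{I}_2)}$ is nonsingular and $x_{*\mathbb{I}_2}$ has no zero entry. Let $\mathbb{I}_2^{c}=\{1,\dots,n\}\setminus\mathbb{I}_2$. (a) If not all entries of $x_{*\mathbb{I}_2^{c}}$ are $0$, then $Ax-B|x|=b$ has infinitely many solutions with the same sign pattern as $x_*$. (b) $Ax-B|x|=b$ has infinitely many solutions $x$ such that $x_{\mathbb{I}_2}$ has the same sign pattern as $x_{*\mathbb{I}_2}$. (c) If $x_{*\mathbb{I}_2^{c}}=0$, then $Ax-B|x|=b$ has no solution other than $x_*$ with the same sign pattern as $x_*$.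
   Context: $|x|$ is the entrywise absolute value; $\operatorname{diag}(s)$ is the diagonal matrix with diagonal $s$. $\operatorname{sign}(r)=1,0,-1$ for $r>0,r=0,r<0$. A vector $x$ has sign pattern $s$ if $\operatorname{sign}(x_{(i)})=s_{(i)}$ for all $i$. $X_{(\mathbb{I}_1,\mathbb{I}_2)}$ is the submatrix with rows in $\mathbb{I}_1$ and columns in $\mathbb{I}_2$; $x_{\mathbb{I}}$ is the subvector with indices in $\mathbb{I}$; $\operatorname{card}$ is cardinality. *)

From HB Require Import structures.
From mathcomp Require Import all_boot all_order all_algebra.
Set Implicit Arguments. Unset Strict Implicit. Unset Printing Implicit Defensive.
Import Order.TTheory GRing.Theory Num.Theory.
Local Open Scope ring_scope.

Definition absv (R : numDomainType) (n : nat) (x : 'cV[R]_n) : 'cV[R]_n :=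
  map_mx (fun r => `|r|) x.

Definition sgv (R : numDomainType) (n : nat) (x : 'cV[R]_n) : 'cV[R]_n :=
  map_mx (fun r => Num.sg r) x.

Definition diagv (R : numDomainType) (n : nat) (s : 'cV[R]_n) : 'M[R]_n :=
  diag_mx s^T.

Definition avesol (R : numDomainType) (m n : nat) (A B : 'M[R]_(m, n))
  (b : 'cV[R]_m) (x : 'cV[R]_n) : Prop :=
  A *m x - B *m absv x = b.

(* submatrix X_(I1, I2), rows/columns taken in increasing index order *)
Definition submxI (R : Type) (m n : nat) (X : 'M[R]_(m, n))
  (I1 : {set 'I_m}) (I2 : {set 'I_n}) : 'M[R]_(#|I1|, #|I2|) :=
  \matrix_(i, j) X (enum_val i) (enum_val j).

Definition sub_nonsingular (R : fieldType) (m n : nat) (X : 'M[R]_(m, n))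
  (I1 : {set 'I_m}) (I2 : {set 'I_n}) : Prop :=
  exists e : #|I1| = #|I2|, castmx (e, erefl) (submxI X I1 I2) \in unitmx.

Definition infinitely_many (T : eqType) (P : T -> Prop) : Prop :=
  forall s : seq T, exists x, P x /\ x \notin s.

From HB Require Import structures.
From mathcomp Require Import all_boot all_order all_algebra.
From mathcomp Require Import lra zify.
Import Order.TTheory GRing.Theory Num.Theory.
Local Open Scope ring_scope.
Set Implicit Arguments. Unset Strict Implicit. Unset Printing Implicit Defensive.

(* For [x] with the sign pattern [s] of [xs], [A x - B |x| = C |x|], so such
   solutions are governed by [C].  Since [C_(I1, I2)] is nonsingular and
   [#|I2| = rank C], the columns of [C] indexed by [I2] are independent and
   span its range: [C] is injective on vectors supported on [I2], which gives
   (c).  For (a) and (b) we find [d <> 0] with [A d = B d'], where [d'] is the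
   right derivative of [t |-> |xs + t d|] at [0]; then [xs + t d] is a solution
   for every small [t > 0] and keeps the signs of the nonzero entries of [xs].
   In (a), [d] is [diag(s)] times a kernel vector of [C] with a nonzero entry
   outside [I2].  In (b), when [xs] vanishes outside [I2], [m < n] gives a
   nonzero [v] supported outside [I2] with [A v] in the range of [C], and [d]
   is [v] corrected by a vector supported on [I2]. *)

Lemma sub_infinitely_many (T : eqType) (P Q : T -> Prop) :
  (forall x, P x -> Q x) -> infinitely_many P -> infinitely_many Q.
Proof. by move=> PQ infP s; have [x [/PQ Qx xs]] := infP s; exists x. Qed.

Lemma infinitely_many_inj (T : eqType) (P : T -> Prop) (f : nat -> T) :
  injective f -> (forall k, P (f k)) -> infinitely_many P.
Proof.
move=> inj_f Pf s; have [/hasP [_ /mapP [k _ ->] fk_s] | ] :=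
  boolP (has [predC s] (map f (iota 0 (size s).+1))); first by exists (f k).
rewrite has_predC negbK => /allP sub_s; have := uniq_leq_size _ sub_s.
by rewrite map_inj_uniq ?iota_uniq // size_map size_iota ltnn => /(_ isT).
Qed.

Section Support.

Variables (R : fieldType) (n : nat).
Implicit Types (S : {set 'I_n}) (v : 'cV[R]_n).

Definition supported S v := forall i, i \notin S -> v i 0 = 0.

Lemma supportedVexists S v :
  supported S v \/ exists2 i, i \notin S & v i 0 != 0.
Proof.
have [/existsP [i /andP [iS vi]] | /existsPn none] :=
  boolP [exists i, (i \notin S) && (v i 0 != 0)]; first by right; exists i.
by left=> i iS; apply/eqP; have := none i; rewrite iS negbK.
Qed.

Definition sel_mx S : 'M[R]_(n, #|S|) := colsub (fun j => enum_val j) 1%:M.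

Definition restr_mx S v : 'cV[R]_#|S| := rowsub (fun j => enum_val j) v.

Lemma sel_mx_supported S y : supported S (sel_mx S *m y).
Proof.
move=> i iNS; rewrite mxE big1 // => j _; rewrite !mxE.
by case: eqP => [ij | _]; [case/negP: iNS; rewrite ij enum_valP | rewrite mul0r].
Qed.

Lemma sel_mxK S y : restr_mx S (sel_mx S *m y) = y.
Proof.
apply/colP => j; rewrite !mxE (bigD1 j) //= big1 ?addr0.
  by rewrite !mxE eqxx mul1r.
by move=> j' /negbTE j'j; rewrite !mxE (inj_eq enum_val_inj) eq_sym j'j mul0r.
Qed.

Lemma restr_mxK S v : supported S v -> sel_mx S *m restr_mx S v = v.
Proof.
move=> suppv; apply/colP => i.
have [iS | iNS] := boolP (i \in S); last by rewrite sel_mx_supported ?suppv.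
rewrite mxE (bigD1 (enum_rank_in iS i)) //= big1 ?addr0.
  by rewrite !mxE enum_rankK_in // eqxx mul1r.
move=> j ji; rewrite !mxE; case: eqP => [ij | _]; last by rewrite mul0r.
by case/eqP: ji; apply: enum_val_inj; rewrite enum_rankK_in.
Qed.

End Support.

Arguments sel_mx {R n} S.

Lemma mulmx_col_free_eq0 (F : fieldType) k l (M : 'M[F]_(k, l)) (y : 'cV_l) :
  \rank M = l -> (M *m y == 0) = (y == 0).
Proof.
move=> rkM; rewrite -trmx_eq0 trmx_mul mulmx_free_eq0 ?trmx_eq0 //.
by rewrite /row_free mxrank_tr rkM.
Qed.

Lemma mxrank_castmx_unit (F : fieldType) k l (M : 'M[F]_(k, l)) (e : k = l) :
  castmx (e, erefl) M \in unitmx -> \rank M = l.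
Proof. by subst k; rewrite castmx_id => /mxrank_unit. Qed.

Lemma mxrank_rowsub (F : fieldType) m n p (f : 'I_p -> 'I_m) (X : 'M[F]_(m, n)) :
  (\rank (rowsub f X) <= \rank X)%N.
Proof. by rewrite -{1}[X]mul1mx -mul_rowsub_mx mxrankM_maxr. Qed.

Section SubNonsingular.

Variables (F : fieldType) (m n : nat) (C : 'M[F]_(m, n)).
Variables (I1 : {set 'I_m}) (I2 : {set 'I_n}).
Hypothesis C12 : sub_nonsingular C I1 I2.

Lemma submxIE : submxI C I1 I2 = rowsub (fun i => enum_val i) (C *m sel_mx I2).
Proof. by apply/matrixP => i j; rewrite mulmx_colsub mulmx1 !mxE. Qed.

Lemma sub_nonsingular_rank : \rank (C *m sel_mx I2) = #|I2|.
Proof.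
apply/eqP; rewrite eqn_leq rank_leq_col /=; case: C12 => e /mxrank_castmx_unit rk.
by rewrite -[X in (X <= _)%N]rk submxIE mxrank_rowsub.
Qed.

Lemma sub_nonsingular_inj f : supported I2 f -> C *m f = 0 -> f = 0.
Proof.
move=> suppf Cf0; rewrite -(restr_mxK suppf).
have /eqP -> : restr_mx I2 f == 0.
  by rewrite -(mulmx_col_free_eq0 _ sub_nonsingular_rank) -mulmxA restr_mxK // Cf0.
by rewrite mulmx0.
Qed.

Lemma sub_nonsingular_range z :
  #|I2| = \rank C -> exists2 w, supported I2 w & C *m w = C *m z.
Proof.
move=> rkC; have sub_CI2 : ((C *m sel_mx I2)^T <= C^T)%MS by rewrite trmx_mul submxMl.
have /eqmxP eq_CI2 : ((C *m sel_mx I2)^T == C^T)%MS.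
  by rewrite -(mxrank_leqif_eq sub_CI2) !mxrank_tr sub_nonsingular_rank rkC.
have /submxP [D DE] : (z^T *m C^T <= (C *m sel_mx I2)^T)%MS.
  by rewrite eq_CI2 submxMl.
exists (sel_mx I2 *m D^T); first exact: sel_mx_supported.
by apply: trmx_inj; rewrite mulmxA trmx_mul [RHS]trmx_mul DE trmx_mul trmxK.
Qed.

End SubNonsingular.

Lemma exists_supported_range_preimage (F : fieldType) m n (A C : 'M[F]_(m, n))
    (T : {set 'I_n}) :
  (m - \rank C < #|T|)%N ->
  exists2 v, v != 0 & supported T v /\ exists z, A *m v = C *m z.
Proof.
(* [K] has [#|T|] rows but rank at most [m - \rank C], the codimension of the
   range of [C]. *)
move=> ltT; pose K := (A *m sel_mx T)^T *m cokermx C^T.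
have /rowV0Pn [v' /sub_kermxP v'K v'0] : kermx K != 0.
  rewrite kermx_eq0 /row_free; apply: contraTneq ltT => <-.
  by rewrite -leqNgt (leq_trans (mxrankM_maxr _ _)) // mxrank_coker mxrank_tr.
have /submxP [D DE] : (v' *m (A *m sel_mx T)^T <= C^T)%MS.
  by rewrite submxE -mulmxA -/K v'K.
exists (sel_mx T *m v'^T); last split.
- apply: contra v'0 => /eqP v0; rewrite -trmx_eq0 -(sel_mxK v'^T) v0.
  by apply/eqP/colP => j; rewrite !mxE.
- exact: sel_mx_supported.
- by exists D^T; apply: trmx_inj; rewrite mulmxA trmx_mul trmxK DE trmx_mul trmxK.
Qed.

Section Perturbation.

Variable R : realFieldType.

Lemma sgr_addr_small (x y : R) : `|y| < `|x| -> Num.sg (x + y) = Num.sg x.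
Proof.
move=> yx; have := ler_norm y; have := ler_norm (- y); rewrite normrN.
case: (ltgtP x 0) yx => [x_lt0 | x_gt0 | ->]; last by rewrite normr0 ltNge normr_ge0.
- rewrite (ltr0_norm x_lt0) => yx *; rewrite (ltr0_sg x_lt0) ltr0_sg //; lra.
- rewrite (gtr0_norm x_gt0) => yx *; rewrite (gtr0_sg x_gt0) gtr0_sg //; lra.
Qed.

Lemma normr_addr_small (x y : R) : `|y| < `|x| -> `|x + y| = `|x| + Num.sg x * y.
Proof. by move=> yx; rewrite [LHS]normrEsg sgr_addr_small // normrEsg mulrDr. Qed.

Variable n : nat.
Implicit Types xs d : 'cV[R]_n.

(* The right derivative of [t |-> absv (xs + t *: d)] at [t = 0]. *)
Definition absv_dir xs d : 'cV[R]_n :=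
  \col_i (if xs i 0 == 0 then `|d i 0| else Num.sg (xs i 0) * d i 0).

Lemma small_step_exists xs d : exists2 delta, 0 < delta &
  forall t i, 0 < t <= delta -> xs i 0 != 0 -> `|t * d i 0| < `|xs i 0|.
Proof.
(* Zero entries of [xs] contribute nothing to [M] since [x / 0 = 0]. *)
pose M := \sum_i `|d i 0| / `|xs i 0|.
have M_ge0 : 0 <= M by apply: sumr_ge0 => i _; rewrite divr_ge0.
have dM i : xs i 0 != 0 -> `|d i 0| <= M * `|xs i 0|.
  move=> xi; rewrite -ler_pdivrMr ?normr_gt0 // /M (bigD1 i) //= lerDl.
  by apply: sumr_ge0 => j _; rewrite divr_ge0.
exists (1 + M)^-1 => [|t i /andP [t_gt0 t_le] xi]; first by rewrite invr_gt0; lra.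
have xi_gt0 : 0 < `|xs i 0| by rewrite normr_gt0.
have t_le' : t * (1 + M) <= 1 by rewrite -ler_pdivlMr; lra.
have := dM i xi; rewrite normrM gtr0_norm //; nra.
Qed.

Lemma absv_perturb xs d t : 0 < t ->
    (forall i, xs i 0 != 0 -> `|t * d i 0| < `|xs i 0|) ->
  absv (xs + t *: d) = absv xs + t *: absv_dir xs d.
Proof.
move=> t_gt0 small; apply/colP => i; rewrite !mxE.
have [-> | xi] := eqVneq (xs i 0) 0.
  by rewrite normr0 !add0r normrM gtr0_norm.
by rewrite normr_addr_small ?small // mulrCA.
Qed.

Lemma sgr_perturb xs d t i : 0 < t ->
    (xs i 0 != 0 -> `|t * d i 0| < `|xs i 0|) ->
  Num.sg ((xs + t *: d) i 0) =
    if xs i 0 == 0 then Num.sg (d i 0) else Num.sg (xs i 0).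
Proof.
move=> t_gt0 small; rewrite !mxE.
have [-> | xi] := eqVneq (xs i 0) 0; last by rewrite sgr_addr_small ?small.
by rewrite add0r sgrM gtr0_sg // mul1r.
Qed.

Lemma avesol_perturb m (A B : 'M[R]_(m, n)) b xs d :
    avesol A B b xs -> d != 0 -> A *m d = B *m absv_dir xs d ->
  infinitely_many (fun x => avesol A B b x /\ forall i, Num.sg (x i 0) =
    if xs i 0 == 0 then Num.sg (d i 0) else Num.sg (xs i 0)).
Proof.
move=> sol_xs d_neq0 Ad; have [delta delta_gt0 small] := small_step_exists xs d.
pose t k := delta / k.+1%:R.
have t_gt0 k : 0 < t k by rewrite divr_gt0 ?ltr0n.
have t_le k : 0 < t k <= delta.
  by rewrite t_gt0 ler_pdivrMr ?ltr0n // ler_peMr ?ler1n // ltW.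
apply: (@infinitely_many_inj _ _ (fun k => xs + t k *: d)) => [k l | k].
  move/addrI/eqP; rewrite -subr_eq0 -scalerBl scaler_eq0 (negbTE d_neq0) orbF.
  rewrite subr_eq0 => /eqP /(mulfI (lt0r_neq0 delta_gt0)) /invr_inj /eqP.
  by rewrite eqr_nat eqSS => /eqP.
split=> [|i]; last by rewrite sgr_perturb // => xi; apply: small.
rewrite /avesol absv_perturb // => [|i]; last exact: small.
by rewrite !mulmxDr -!scalemxAr Ad -sol_xs opprD addrACA subrr addr0.
Qed.

End Perturbation.

Lemma mulmx_diagv (R : numDomainType) n (s v : 'cV[R]_n) i :
  (diagv s *m v) i 0 = s i 0 * v i 0.
Proof. by rewrite mul_diag_mx !mxE. Qed.

Lemma diagv_sgv_absv (R : realDomainType) n (x : 'cV[R]_n) :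
  diagv (sgv x) *m absv x = x.
Proof. by apply/colP => i; rewrite mulmx_diagv !mxE -numEsg. Qed.

Lemma ave_sgvE (R : realDomainType) m n (A B : 'M[R]_(m, n)) (x : 'cV[R]_n) :
  A *m x - B *m absv x = (A *m diagv (sgv x) - B) *m absv x.
Proof. by rewrite mulmxBl -mulmxA diagv_sgv_absv. Qed.

Lemma absv_dir_diagv_sgv (R : realFieldType) n (xs f : 'cV[R]_n) :
    (forall i, xs i 0 = 0 -> f i 0 = 0) ->
  absv_dir xs (diagv (sgv xs) *m f) = f.
Proof.
move=> f0; apply/colP => i; rewrite mxE mulmx_diagv mxE.
have [xi | xi] := eqVneq (xs i 0) 0; first by rewrite f0 // mulr0 normr0.
by rewrite mulrA -expr2 sqr_sg xi mul1r.
Qed.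

Section AbsoluteValueEquation.

Variables (R : realFieldType) (m n : nat) (A B : 'M[R]_(m, n)).
Variables (b : 'cV[R]_m) (xs : 'cV[R]_n).
Hypothesis sol_xs : avesol A B b xs.
Local Notation s := (sgv xs).
Local Notation C := (A *m diagv (sgv xs) - B).
Variables (I1 : {set 'I_m}) (I2 : {set 'I_n}).
Hypothesis C12 : sub_nonsingular C I1 I2.

Lemma avesol_sgv_unique x :
  supported I2 xs -> avesol A B b x -> sgv x = s -> x = xs.
Proof.
move=> supp_xs sol_x sx; have absE : absv x = absv xs.
  apply/eqP; rewrite -subr_eq0; apply/eqP/(sub_nonsingular_inj C12) => [i iI2|].
    have /colP/(_ i) := sx; rewrite !mxE supp_xs // sgr0.
    by move/eqP; rewrite sgr_eq0 normr0 subr0 => /eqP ->; rewrite normr0.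
  by rewrite mulmxBr -{1}sx -!ave_sgvE sol_x sol_xs subrr.
by rewrite -[x]diagv_sgv_absv sx absE diagv_sgv_absv.
Qed.

Hypothesis rkC : #|I2| = \rank C.
Hypothesis xs_I2 : forall i, i \in I2 -> xs i 0 != 0.

Lemma avesol_sgv_infinite : (exists2 i, i \notin I2 & xs i 0 != 0) ->
  infinitely_many (fun x => avesol A B b x /\ sgv x = s).
Proof.
case=> i0 i0I2 xi0.
have [w supp_w Cw] := sub_nonsingular_range C12 (delta_mx i0 0) rkC.
pose f := delta_mx i0 0 - w; pose d := diagv s *m f.
have f0 i : xs i 0 = 0 -> f i 0 = 0.
  move=> xi; have iI2 : i \notin I2 by apply/negP => /xs_I2; rewrite xi eqxx.
  rewrite !mxE supp_w // subr0; case: eqP => // ii0.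
  by move: xi0; rewrite -ii0 xi eqxx.
have d_neq0 : d != 0.
  apply: contraNneq xi0 => /colP/(_ i0).
  by rewrite mulmx_diagv !mxE supp_w // !eqxx subr0 mulr1 => /eqP; rewrite sgr_eq0.
have Ad : A *m d = B *m absv_dir xs d.
  rewrite absv_dir_diagv_sgv // mulmxA -[A *m _](subrK B) mulmxDl.
  by rewrite mulmxBr Cw subrr add0r.
apply: sub_infinitely_many (avesol_perturb sol_xs d_neq0 Ad) => x [sol_x sgx].
split=> //; apply/colP => i; rewrite mxE sgx [RHS]mxE.
have [xi | //] := eqVneq (xs i 0) 0.
by rewrite /d mulmx_diagv mxE xi sgr0 mul0r sgr0.
Qed.

Hypothesis lt_mn : (m < n)%N.

Lemma avesol_sg_on_infinite : infinitely_many (fun x => avesol A B b x /\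
  forall i, i \in I2 -> Num.sg (x i 0) = Num.sg (xs i 0)).
Proof.
have [supp_xs | xs_out] := supportedVexists I2 xs; last first.
  apply: sub_infinitely_many (avesol_sgv_infinite xs_out) => x [sol_x sx].
  by split=> // i _; have /colP/(_ i) := sx; rewrite !mxE.
have [|v v_neq0 [supp_v [z Av]]] := @exists_supported_range_preimage _ _ _ A C (~: I2).
  by have := cardsC I2; have := rank_leq_row C; rewrite card_ord; lia.
have v_I2 i : i \in I2 -> v i 0 = 0 by move=> iI2; rewrite supp_v // inE iI2.
(* This choice of [w] makes [A *m d = B *m (w + absv v)]. *)
have [w supp_w Cw] := sub_nonsingular_range C12 (- absv v - z) rkC.
pose d := diagv s *m w + v.
have dE i : d i 0 = Num.sg (xs i 0) * w i 0 + v i 0 by rewrite mxE mulmx_diagv mxE.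
have dir_d : absv_dir xs d = w + absv v.
  apply/colP => i; rewrite mxE dE !mxE.
  have [iI2 | iNI2] := boolP (i \in I2).
    rewrite (negbTE (xs_I2 iI2)) v_I2 // normr0 !addr0.
    by rewrite mulrA -expr2 sqr_sg (xs_I2 iI2) mul1r.
  by rewrite supp_xs // eqxx supp_w // mulr0 !add0r.
have Cv : C *m absv v = - (B *m absv v).
  rewrite mulmxBl -mulmxA; suff -> : diagv s *m absv v = 0 by rewrite mulmx0 sub0r.
  apply/colP => i; rewrite mulmx_diagv !mxE.
  have [/v_I2 -> | /supp_xs ->] := boolP (i \in I2).
    by rewrite normr0 mulr0.
  by rewrite sgr0 mul0r.
have Ad : A *m d = B *m absv_dir xs d.
  rewrite dir_d mulmxDr mulmxA -[A *m _](subrK B) mulmxDl Cw Av mulmxBr mulmxN Cv.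
  by rewrite opprK mulmxDr addrAC subrK addrC.
have d_neq0 : d != 0.
  apply: contra_neq v_neq0 => d0; apply/colP => i; rewrite mxE.
  have /colP/(_ i) := d0; rewrite dE mxE.
  by have [/v_I2 -> | /supp_w ->] := boolP (i \in I2); rewrite ?mulr0 ?add0r.
apply: sub_infinitely_many (avesol_perturb sol_xs d_neq0 Ad) => x [sol_x sgx].
by split=> // i iI2; rewrite sgx (negbTE (xs_I2 iI2)).
Qed.

End AbsoluteValueEquation.

Theorem theorem3p3 (R : realFieldType) (m n : nat) (A B : 'M[R]_(m, n))
  (b : 'cV[R]_m) (xs : 'cV[R]_n) (I1 : {set 'I_m}) (I2 : {set 'I_n}) :
  (m < n)%N ->
  avesol A B b xs ->
  let s := sgv xs in
  let C := A *m diagv s - B in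
  (\rank C <= #|[set i | (xs i ord0 != 0)%R]|)%N ->
  #|I1| = \rank C -> #|I2| = \rank C ->
  sub_nonsingular C I1 I2 ->
  (forall i, i \in I2 -> xs i ord0 != 0) ->
  [/\ ((exists2 i, i \in ~: I2 & xs i ord0 != 0) ->
         infinitely_many (fun x => avesol A B b x /\ sgv x = s)),
      infinitely_many (fun x => avesol A B b x /\
         (forall i, i \in I2 -> Num.sg (x i ord0) = Num.sg (xs i ord0)))
    & ((forall i, i \in ~: I2 -> xs i ord0 = 0) ->
         forall x, avesol A B b x -> sgv x = s -> x = xs)].
Proof.
(* The two unnamed hypotheses follow from the others: [#|I1| = #|I2|] by
   nonsingularity, and [I2] lies in the support of [xs]. *)
move=> lt_mn sol_xs s C _ _ rkC C12 xs_I2; split.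
- case=> i; rewrite inE => iI2 xi.
  by apply: (avesol_sgv_infinite sol_xs C12 rkC xs_I2); exists i.
- exact: (avesol_sg_on_infinite sol_xs C12 rkC xs_I2 lt_mn).
- move=> xs0 x sol_x sx; apply: (avesol_sgv_unique sol_xs C12) sol_x sx => i iI2.
  by apply: xs0; rewrite inE.
Qed.
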